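(* If the semigroup $\mathbb NA$ is scored, then $\mathbb Q(A\cap\tau)\cap\mathbb Z^d=\mathbb Z(A\cap\tau)$ for all faces $\tau$ of the cone $\mathbb R_{\ge0}A$.
   Context: $A\subset\mathbb Z^d$ is a finite set generating the group $\mathbb Z^d$; $\mathbb NA$ its monoid. For a facet $\sigma$ of $\mathbb R_{\ge0}A$, $F_\sigma$ is the unique linear form with $F_\sigma(\mathbb R_{\ge0}A)\ge0$, $F_\sigma(\sigma)=0$, $F_\sigma(\mathbb Z^d)=\mathbb Z$. $\mathbb NA$ is scored if $\mathbb NA=\bigcap_{\sigma\text{ facet}}\{\mathbf a\in\mathbb Z^d:F_\sigma(\mathbf a)\in F_\sigma(\mathbb NA)\}$. *)

From mathcomp Require Import all_boot all_order all_algebra.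
From mathcomp Require Import reals.
Set Implicit Arguments. Unset Strict Implicit. Unset Printing Implicit Defensive.
Import Order.TTheory GRing.Theory Num.Theory.
Local Open Scope ring_scope.

Section Defs.
Variables (R : realType) (d : nat).
Implicit Types (A : seq 'rV[int]_d) (a x : 'rV[int]_d).

Definition toR (a : 'rV[int]_d) : 'rV[R]_d := map_mx (fun z : int => z%:~R) a.
Definition toQ (a : 'rV[int]_d) : 'rV[rat]_d := map_mx (fun z : int => z%:~R) a.

Definition dotR (l x : 'rV[R]_d) : R := \sum_(i < d) l 0 i * x 0 i.
Definition dotZ (l x : 'rV[int]_d) : int := \sum_(i < d) l 0 i * x 0 i.

Definition generates A : Prop :=
  forall x, exists c : 'I_(size A) -> int, x = \sum_(i < size A) c i *: A`_i.

Definition inNA A x : Prop :=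
  exists n : 'I_(size A) -> nat, x = \sum_(i < size A) A`_i *+ n i.

Definition cone A (y : 'rV[R]_d) : Prop :=
  exists c : 'I_(size A) -> R, (forall i, 0 <= c i) /\
    y = \sum_(i < size A) c i *: toR A`_i.

(* faces of the cone: intersections with supporting hyperplanes
   (l = 0 gives the cone itself) *)
Definition is_face A (tau : 'rV[R]_d -> Prop) : Prop :=
  exists l : 'rV[R]_d, (forall y, cone A y -> 0 <= dotR l y) /\
    (forall y, tau y <-> (cone A y /\ dotR l y = 0)).

Definition dim_ge (tau : 'rV[R]_d -> Prop) (k : nat) : Prop :=
  exists v : 'I_k -> 'rV[R]_d, (forall i, tau (v i)) /\
    row_free (\matrix_(i < k) v i).

Definition is_facet A (sigma : 'rV[R]_d -> Prop) : Prop :=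
  is_face A sigma /\ dim_ge sigma d.-1 /\ ~ dim_ge sigma d.

(* F is the primitive integral inner normal F_sigma of the facet sigma:
   F >= 0 on the cone, F = 0 on sigma, F(Z^d) = Z *)
Definition is_Fsigma A (sigma : 'rV[R]_d -> Prop) (F : 'rV[int]_d) : Prop :=
  (forall y, cone A y -> 0 <= dotR (toR F) y) /\
  (forall y, sigma y -> dotR (toR F) y = 0) /\
  (forall z : int, exists x, dotZ F x = z).

Definition scored A : Prop :=
  forall x,
    (forall (sigma : 'rV[R]_d -> Prop) (F : 'rV[int]_d),
        is_facet A sigma -> is_Fsigma A sigma F ->
        exists b, inNA A b /\ dotZ F x = dotZ F b) ->
    inNA A x.

Definition inQspan A (tau : 'rV[R]_d -> Prop) x : Prop :=
  exists q : 'I_(size A) -> rat, (forall i : 'I_(size A), ~ tau (toR A`_i) -> q i = 0) /\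
    toQ x = \sum_(i < size A) q i *: toQ A`_i.

Definition inZspan A (tau : 'rV[R]_d -> Prop) x : Prop :=
  exists c : 'I_(size A) -> int, (forall i : 'I_(size A), ~ tau (toR A`_i) -> c i = 0) /\
    x = \sum_(i < size A) c i *: A`_i.

End Defs.

From mathcomp Require Import all_boot all_order all_algebra reals boolp.
From mathcomp Require Import zify ring.
Import Order.TTheory GRing.Theory Num.Theory.
Set Implicit Arguments. Unset Strict Implicit. Unset Printing Implicit Defensive.
Local Open Scope ring_scope.

(* Let x be an integer point of Q(A ∩ tau) and w the sum of the elements of
   A ∩ tau.  For a facet normal F, F(N A) is an additive semigroup containing
   two consecutive integers (F is onto Z and A generates Z^d), hence all large
   integers; so F(x + N w) lies in F(N A) for all large N, either because
   F(w) > 0 or because F kills A ∩ tau and therefore x.  A facet normal is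
   determined by the elements of A it kills, so finitely many occur and one N
   serves them all: scoredness puts z = x + N w in N A.  A supporting form of
   tau vanishes on z, so z is an N-combination of A ∩ tau, and x = z - N w
   lies in Z(A ∩ tau). *)

Section Dot.
Variables (T : comPzRingType) (d : nat).
Implicit Types (l x y : 'rV[T]_d).

Definition dot l x : T := \sum_(j < d) l 0 j * x 0 j.

Lemma dot_sumr l I (r : seq I) (P : pred I) (f : I -> 'rV[T]_d) :
  dot l (\sum_(k <- r | P k) f k) = \sum_(k <- r | P k) dot l (f k).
Proof.
rewrite /dot exchange_big; apply: eq_bigr => j _.
by rewrite summxE mulr_sumr.
Qed.

Lemma dotDr l x y : dot l (x + y) = dot l x + dot l y.
Proof. by rewrite /dot -big_split; apply: eq_bigr => j _; rewrite mxE mulrDr. Qed.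

Lemma dotBr l x y : dot l (x - y) = dot l x - dot l y.
Proof. by rewrite /dot -sumrB; apply: eq_bigr => j _; rewrite !mxE mulrBr. Qed.

Lemma dotMnr l x k : dot l (x *+ k) = dot l x *+ k.
Proof. by rewrite /dot -sumrMnl; apply: eq_bigr => j _; rewrite mulmxnE mulrnAr. Qed.

Lemma dotZr l c x : dot l (c *: x) = c * dot l x.
Proof. by rewrite /dot mulr_sumr; apply: eq_bigr => j _; rewrite mxE mulrCA. Qed.

Lemma dotZl c l x : dot (c *: l) x = c * dot l x.
Proof. by rewrite /dot mulr_sumr; apply: eq_bigr => j _; rewrite mxE mulrA. Qed.

Lemma dot0r l : dot l 0 = 0.
Proof. by rewrite /dot big1 // => j _; rewrite mxE mulr0. Qed.

Lemma dot0l x : dot 0 x = 0.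
Proof. by rewrite /dot big1 // => j _; rewrite mxE mul0r. Qed.

Lemma dot_delta l j : dot l (delta_mx 0 j) = l 0 j.
Proof.
rewrite /dot (bigD1 j) //= mxE !eqxx mulr1 big1 ?addr0 // => k /negbTE kj.
by rewrite mxE kj andbF mulr0.
Qed.

Lemma dot_inj l l' : (forall x, dot l x = dot l' x) -> l = l'.
Proof. by move=> e; apply/rowP => j; rewrite -!dot_delta e. Qed.

End Dot.

Lemma dot_kermx (K : fieldType) d m (v : 'I_m -> 'rV[K]_d) (w : 'rV[K]_d) :
  (forall k, dot w (v k) = 0) -> (w <= kermx (\matrix_k v k)^T)%MS.
Proof.
move=> wv; apply/sub_kermxP/rowP => k; rewrite !mxE -[RHS](wv k).
by apply: eq_bigr => j _; rewrite !mxE.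
Qed.

Lemma kermx_line (K : fieldType) d (V : 'M[K]_(d.-1, d)) (u u' : 'rV[K]_d) :
  row_free V -> u != 0 -> (u <= kermx V^T)%MS -> (u' <= kermx V^T)%MS ->
  exists lam, u' = lam *: u.
Proof.
move=> /eqP rkV u0 uK u'K.
have rkK : \rank (kermx V^T) = (d - d.-1)%N by rewrite mxrank_ker mxrank_tr rkV.
have Ku : (kermx V^T <= u)%MS.
  have := mxrank_leqif_eq uK; rewrite rank_rV u0 rkK /= => -[le_rk eq_rk].
  suff : (u == kermx V^T)%MS by case/andP.
  by rewrite -eq_rk; move: le_rk; apply: contraTT; lia.
by apply/sub_rVP; apply: submx_trans Ku.
Qed.

Lemma dotZE d : @dotZ d = @dot _ d. Proof. by []. Qed.
Lemma dotRE (R : realType) d : @dotR R d = @dot _ d. Proof. by []. Qed.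

Lemma semigroup_ge_sqr (S : int -> Prop) (q : int) :
  S 0 -> (forall a b, S a -> S b -> S (a + b)) -> S q -> S (q + 1) -> 0 <= q ->
  forall m, q * q <= m -> S m.
Proof.
move=> S0 SD Sq Sq1 q_ge0 m le_qq_m.
have SMn a k : S a -> S (a *+ k).
  by move=> Sa; elim: k => [|k IH]; rewrite ?mulr0n ?mulrS //; apply: SD.
have m_ge0 : 0 <= m by apply: le_trans le_qq_m; rewrite mulr_ge0.
case: q q_ge0 Sq Sq1 le_qq_m => // q _ Sq Sq1; case: m m_ge0 => // m _.
rewrite -PoszM lez_nat => le_qq_m.
have [q0|q_gt0] := posnP q.
  by move: Sq1; rewrite q0 add0r -natz => /SMn.
pose s := (m %/ q)%N; pose r := (m %% q)%N.
have r_le_s : (r <= s)%N.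
  by rewrite ltnW // (leq_trans (ltn_pmod m q_gt0)) // leq_divRL.
have -> : Posz m = q%:Z *+ (s - r) + (q%:Z + 1) *+ r.
  by rewrite !pmulrn !mulrzz {1}(divn_eq m q) -/s -/r -subzn // PoszD PoszM; ring.
by apply: SD; apply: SMn.
Qed.

Lemma uniform_bound_fin (T : Type) (K : finType) (P : T -> Prop) (key : T -> K)
    (Q : T -> nat -> Prop) :
  (forall t t', P t -> P t' -> key t = key t' -> t = t') ->
  (forall t, P t -> exists N, forall N', (N <= N')%N -> Q t N') ->
  exists N, forall t, P t -> Q t N.
Proof.
move=> key_inj evQ.
have Nk k : exists N, forall t, P t -> key t = k -> forall N', (N <= N')%N -> Q t N'.
  have [[t [Pt <-]]|no] := pselect (exists t, P t /\ key t = k).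
    have [N QN] := evQ t Pt; exists N => t' Pt' /(key_inj _ _ Pt' Pt) ->; exact: QN.
  by exists 0%N => t Pt kt; case: no; exists t.
have [Nf QNf] := fin_all_exists Nk.
by exists (\max_k Nf k) => t Pt; apply: QNf Pt erefl _ _; apply: leq_bigmax.
Qed.

Section ScoredSemigroup.
Variables (R : realType) (d : nat) (A : seq 'rV[int]_d).
Local Notation n := (size A).
Local Notation a i := (A`_i).
Implicit Types (F x b : 'rV[int]_d) (tau : 'rV[R]_d -> Prop).

Lemma toRD (u v : 'rV[int]_d) : toR R (u + v) = toR R u + toR R v.
Proof. by rewrite /toR map_mxD. Qed.

Lemma toRMn x k : toR R (x *+ k) = toR R x *+ k.
Proof. exact: raddfMn. Qed.

Lemma toR_sum I (r : seq I) (P : pred I) (f : I -> 'rV[int]_d) :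
  toR R (\sum_(i <- r | P i) f i) = \sum_(i <- r | P i) toR R (f i).
Proof. exact: raddf_sum. Qed.

Lemma dotR_toR F y : dotR (toR R F) (toR R y) = (dotZ F y)%:~R.
Proof.
by rewrite /dotR /dotZ rmorph_sum; apply: eq_bigr => j _; rewrite !mxE rmorphM.
Qed.

Lemma cone_a (i : 'I_n) : cone A (toR R (a i)).
Proof.
exists (fun j => (j == i)%:R); split => [j|]; first by rewrite ler0n.
rewrite (bigD1 i) //= eqxx scale1r big1 ?addr0 // => j /negbTE ->.
by rewrite scale0r.
Qed.

Lemma dotR_cone (l : 'rV[R]_d) (c : 'I_n -> R) :
  dotR l (\sum_(i < n) c i *: toR R (a i)) = \sum_(i < n) c i * dotR l (toR R (a i)).
Proof. by rewrite dotRE dot_sumr; apply: eq_bigr => i _; rewrite dotZr. Qed.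

Lemma inNA0 : inNA A 0.
Proof. by exists (fun=> 0%N); rewrite big1 // => i _; rewrite mulr0n. Qed.

Lemma inNAD b1 b2 : inNA A b1 -> inNA A b2 -> inNA A (b1 + b2).
Proof.
move=> [m1 ->] [m2 ->]; exists (fun i => m1 i + m2 i)%N.
by rewrite -big_split; apply: eq_bigr => i _; rewrite mulrnDr.
Qed.

(* [c = (c + |c|) - |c|] with both terms non-negative. *)
Lemma generates_subNA : generates A ->
  forall x, exists u v, [/\ inNA A u, inNA A v & x = u - v].
Proof.
move=> genA x; have [c ->] := genA x.
exists (\sum_(i < n) a i *+ `|(c i + `|c i|)%R|%N), (\sum_(i < n) a i *+ `|c i|%N).
split; [by eexists | by eexists |].
rewrite -sumrB; apply: eq_bigr => i _.
by rewrite -!scaler_nat !natz !abszE [`|c i + _|]ger0_norm -?scalerBl ?addrK //; lia.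
Qed.

Definition is_facet_normal F :=
  exists sigma : 'rV[R]_d -> Prop, is_facet A sigma /\ is_Fsigma A sigma F.

Section FacetNormal.
Variable F : 'rV[int]_d.
Hypothesis nF : is_facet_normal F.

Lemma facet_normal_ge0 (i : 'I_n) : 0 <= dotZ F (a i).
Proof.
have [sigma [_ [F_ge0 _]]] := nF.
by have := F_ge0 _ (cone_a i); rewrite dotR_toR ler0z.
Qed.

Lemma facet_normal_NA_ge0 b : inNA A b -> 0 <= dotZ F b.
Proof.
move=> [m ->]; rewrite dotZE dot_sumr sumr_ge0 // => i _.
by rewrite dotMnr mulrn_wge0 // facet_normal_ge0.
Qed.

Lemma facet_normal_consecutive : generates A ->
  exists u v, [/\ inNA A u, inNA A v & dotZ F u = dotZ F v + 1].
Proof.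
move=> genA; have [sigma [_ [_ [_ F_surj]]]] := nF; have [y Fy] := F_surj 1.
have [u [v [uNA vNA ey]]] := generates_subNA genA y.
exists u, v; split => //; move: Fy; rewrite ey dotZE dotBr => /eqP.
by rewrite subr_eq addrC => /eqP.
Qed.

Lemma facet_normal_image_cofinite : generates A ->
  exists B, forall m, B <= m -> exists b, inNA A b /\ dotZ F b = m.
Proof.
move=> genA; have [u [v [uNA vNA Fuv]]] := facet_normal_consecutive genA.
exists (dotZ F v * dotZ F v); apply: semigroup_ge_sqr.
- by exists 0; split; [exact: inNA0 | rewrite dotZE dot0r].
- move=> _ _ [b1 [b1NA <-]] [b2 [b2NA <-]].
  by exists (b1 + b2); split; [exact: inNAD | rewrite dotZE dotDr].
- by exists v.
- by exists u.
- exact: facet_normal_NA_ge0.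
Qed.

End FacetNormal.

Lemma cone_dot_eq0 (l l' y : 'rV[R]_d) :
  (forall i : 'I_n, 0 <= dotR l (toR R (a i))) ->
  (forall i : 'I_n, dotR l (toR R (a i)) = 0 -> dotR l' (toR R (a i)) = 0) ->
  cone A y -> dotR l y = 0 -> dotR l' y = 0.
Proof.
move=> l_ge0 ll' [c [c_ge0 ->]]; rewrite !dotR_cone => cl0.
have cli0 := psumr_eq0P (fun i _ => mulr_ge0 (c_ge0 i) (l_ge0 i)) cl0.
apply: big1 => i _; have /eqP := cli0 i isT.
by rewrite mulf_eq0 => /orP[/eqP-> | /eqP/ll'->]; rewrite ?mul0r ?mulr0.
Qed.

Lemma proportional_primitive_eq F F' (lam : R) :
  (forall z, (dotZ F' z)%:~R = lam * (dotZ F z)%:~R :> R) ->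
  (exists z, dotZ F z = 1) -> (exists z, dotZ F' z = 1) ->
  (exists z, 0 < dotZ F z /\ 0 <= dotZ F' z) -> F' = F.
Proof.
move=> F'_lam [y Fy] [y' F'y'] [z [Fz F'z]].
pose k := dotZ F' y.
have F'_k w : dotZ F' w = k * dotZ F w.
  by apply: (intr_inj (R := R)); rewrite intrM !F'_lam Fy mulr1.
have k_ge0 : 0 <= k by rewrite -(pmulr_lge0 _ Fz) -F'_k.
have k_eq1 : k = 1.
  have /eqP := congr1 absz (etrans (esym (F'_k y')) F'y').
  by rewrite abszM muln_eq1 => /andP[/eqP k1 _]; rewrite -(gez0_abs k_ge0) k1.
by apply: dot_inj => w; have := F'_k w; rewrite k_eq1 mul1r.
Qed.

(* F' vanishes on the (d-1)-dimensional facet of F, so F' is proportional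
   to F; being primitive and non-negative on A, they coincide. *)
Lemma facet_normal_eq F F' : generates A -> is_facet_normal F -> is_facet_normal F' ->
  (forall i : 'I_n, dotZ F (a i) = 0 -> dotZ F' (a i) = 0) -> F' = F.
Proof.
move=> genA nF nF' FF'.
have [sigma [[[l [_ sigmaE]] [[v [v_sigma v_free]] _]] [_ [F_sigma F_surj]]]] := nF.
have [_ [_ [_ [_ F'_surj]]]] := nF'.
have F'_sigma (s : 'rV[R]_d) : sigma s -> dotR (toR R F') s = 0.
  move=> ss; have [cs _] := (sigmaE s).1 ss.
  apply: (cone_dot_eq0 _ _ cs (F_sigma s ss)) => i; rewrite !dotR_toR.
    by rewrite ler0z facet_normal_ge0.
  by move/eqP; rewrite intr_eq0 => /eqP/FF' ->.
have [y Fy] := F_surj 1.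
have F_neq0 : toR R F != 0.
  apply/eqP => F0; move: (dotR_toR F y).
  by rewrite F0 Fy dotRE dot0l => /eqP; rewrite eq_sym oner_eq0.
have [lam F'_lam] := kermx_line v_free F_neq0
  (dot_kermx (fun k => F_sigma _ (v_sigma k)))
  (dot_kermx (fun k => F'_sigma _ (v_sigma k))).
apply: (@proportional_primitive_eq _ _ lam).
- by move=> z; rewrite -!dotR_toR F'_lam dotRE dotZl.
- by exists y.
- exact: F'_surj.
- have [u [v' [uNA vNA Fuv]]] := facet_normal_consecutive nF genA.
  exists u; split; first by rewrite Fuv ltr_pwDr ?(facet_normal_NA_ge0 nF vNA).
  by apply: (facet_normal_NA_ge0 nF' uNA).
Qed.

Definition face_sum tau := \sum_(i < n | `[< tau (toR R (a i)) >]) a i.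

Lemma inQspan_dot_eq0 tau x (l : 'rV[R]_d) : inQspan A tau x ->
  (forall i : 'I_n, tau (toR R (a i)) -> dotR l (toR R (a i)) = 0) ->
  dotR l (toR R x) = 0.
Proof.
move=> [q [q0 xq]] l0.
have -> : toR R x = \sum_(i < n) ratr (q i) *: toR R (a i).
  apply/rowP => j; move/rowP/(_ j): xq; rewrite !mxE !summxE => xqj.
  rewrite -[(x 0 j)%:~R]ratr_int xqj rmorph_sum; apply: eq_bigr => i _.
  by rewrite !mxE rmorphM rmorph_int.
rewrite dotR_cone big1 // => i _.
by have [/l0 -> | /q0 ->] := pselect (tau (toR R (a i))); rewrite ?mulr0 ?rmorph0 ?mul0r.
Qed.

Lemma facet_normal_shift_eventually F tau x : generates A ->
  is_facet_normal F -> inQspan A tau x ->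
  exists N, forall N', (N <= N')%N ->
    exists b, inNA A b /\ dotZ F (x + face_sum tau *+ N') = dotZ F b.
Proof.
move=> genA nF xQ.
have Fw_ge0 : 0 <= dotZ F (face_sum tau).
  by rewrite dotZE dot_sumr sumr_ge0 // => i _; apply: facet_normal_ge0.
have FxwE N' : dotZ F (x + face_sum tau *+ N') = dotZ F x + dotZ F (face_sum tau) *+ N'.
  by rewrite dotZE dotDr dotMnr.
move: Fw_ge0; rewrite le0r => /orP[/eqP Fw0 | Fw_gt0].
  have Fa0 (i : 'I_n) : tau (toR R (a i)) -> dotZ F (a i) = 0.
    move: Fw0; rewrite dotZE dot_sumr => /(psumr_eq0P (fun j _ => facet_normal_ge0 nF j)).
    by move=> Fa0 ti; apply: Fa0; apply/asboolP.
  have Fx0 : dotZ F x = 0.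
    apply: (intr_inj (R := R)); rewrite -dotR_toR (inQspan_dot_eq0 xQ) // => i /Fa0.
    by rewrite dotR_toR => ->.
  exists 0%N => N' _; exists 0; split; first exact: inNA0.
  by rewrite FxwE Fx0 Fw0 mul0rn addr0 dotZE dot0r.
have [B FB] := facet_normal_image_cofinite nF genA.
exists `|B - dotZ F x|%N => N' le_N'.
have [|b [bNA Fb]] := FB (dotZ F (x + face_sum tau *+ N')); last by exists b.
by rewrite FxwE pmulrn mulrzz; move: Fw_gt0 le_N'; rewrite gtz0_ge1; nia.
Qed.

Lemma shift_inNA tau x : generates A -> scored R A -> inQspan A tau x ->
  exists N, inNA A (x + face_sum tau *+ N).
Proof.
move=> genA scA xQ.
pose zeros F := [set i : 'I_n | dotZ F (a i) == 0].
have [|N HN] := @uniform_bound_fin _ _ is_facet_normal zeros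
  (fun F N => exists b, inNA A b /\ dotZ F (x + face_sum tau *+ N) = dotZ F b) _
  (fun F nF => facet_normal_shift_eventually genA nF xQ).
  move=> F F' nF nF' eqz; apply/esym/(facet_normal_eq genA nF nF') => i Fi0.
  have : i \in zeros F' by rewrite -eqz inE Fi0.
  by rewrite inE => /eqP.
by exists N; apply: scA => sigma F facet_sigma F_sigma; apply: HN; exists sigma.
Qed.

Section Face.
Variables (tau : 'rV[R]_d -> Prop) (l : 'rV[R]_d).
Hypothesis l_ge0 : forall y, cone A y -> 0 <= dotR l y.
Hypothesis tauE : forall y, tau y <-> cone A y /\ dotR l y = 0.

Lemma face_shift_dot_eq0 x N : inQspan A tau x ->
  dotR l (toR R (x + face_sum tau *+ N)) = 0.
Proof.
move=> xQ.
have la0 (i : 'I_n) : tau (toR R (a i)) -> dotR l (toR R (a i)) = 0 by case/tauE.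
rewrite toRD toRMn dotRE dotDr dotMnr [dot _ _](inQspan_dot_eq0 xQ la0) add0r.
by rewrite toR_sum dot_sumr big1 ?mul0rn // => i /asboolP/la0.
Qed.

Lemma inNA_face_support (m : 'I_n -> nat) :
  dotR l (toR R (\sum_(i < n) a i *+ m i)) = 0 ->
  forall i : 'I_n, ~ tau (toR R (a i)) -> m i = 0%N.
Proof.
move=> lz i nti.
have terms_ge0 (j : 'I_n) : true -> 0 <= dot l (toR R (a j *+ m j)).
  by move=> _; rewrite toRMn dotMnr; apply/mulrn_wge0/l_ge0/cone_a.
move: lz; rewrite toR_sum dotRE dot_sumr => /(psumr_eq0P terms_ge0)/(_ i isT)/eqP.
rewrite toRMn dotMnr mulrn_eq0 => /orP[/eqP // | /eqP la0].
by case: nti; apply/tauE; split; [exact: cone_a | exact: la0].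
Qed.

End Face.

Lemma inZspan_of_shift tau x N (m : 'I_n -> nat) :
  (forall i : 'I_n, ~ tau (toR R (a i)) -> m i = 0%N) ->
  x + face_sum tau *+ N = \sum_(i < n) a i *+ m i -> inZspan A tau x.
Proof.
move=> m0 ex.
exists (fun i => (m i)%:Z - (if `[< tau (toR R (a i)) >] then N else 0%N)%:Z); split.
  by move=> i nti; rewrite m0 // asboolF.
rewrite -[x](addrK (face_sum tau *+ N)) ex -sumrMnl [X in _ - X]big_mkcond -sumrB /=.
apply: eq_bigr => i _; rewrite scalerBl -!scaler_nat !natz.
by case: `[< _ >]; rewrite ?scale0r.
Qed.

Lemma inZspan_inQspan tau x : inZspan A tau x -> inQspan A tau x.
Proof.
move=> [c [c0 ->]]; exists (fun i => (c i)%:~R); split => [i /c0 -> //|].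
apply/rowP => j; rewrite !mxE !summxE rmorph_sum; apply: eq_bigr => i _.
by rewrite !mxE rmorphM.
Qed.

End ScoredSemigroup.

Theorem lemma8p11 (R : realType) (d : nat) (A : seq 'rV[int]_d) :
  generates A -> scored R A ->
  forall tau : 'rV[R]_d -> Prop, is_face A tau ->
  forall x : 'rV[int]_d, inQspan A tau x <-> inZspan A tau x.
Proof.
move=> genA scA tau [l [l_ge0 tauE]] x; split; last exact: inZspan_inQspan.
move=> xQ; have [N [m ez]] := shift_inNA genA scA xQ.
apply: (inZspan_of_shift _ ez); apply: (inNA_face_support l_ge0 tauE).
by rewrite -ez (face_shift_dot_eq0 tauE).
Qed.
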